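(* Let $G$ be a finite group and $X$ a path-connected CW complex with a free cellular $G$-action such that $\mathrm{cat}(X)=\mathrm{TC}(X)$. Then $\mathrm{TC}^{G,\infty}(X)=\mathrm{cat}(X)$.
   Context: $\mathrm{cat}$, $\mathrm{TC}$ are reduced LS category and topological complexity. $PX$ is the path space; $\mathcal{P}_k(X)=\{(\gamma_1,\dots,\gamma_k)\in(PX)^k\mid G\gamma_i(1)=G\gamma_{i+1}(0),\ 1\le i\le k-1\}$, $\pi_k(\gamma_1,\dots,\gamma_k)=(\gamma_1(0),\gamma_k(1))\in X\times X$; $\mathrm{secat}$ is reduced sectional category (least $n$ such that the base is covered by $n+1$ open sets each admitting a homotopy section); $\mathrm{TC}^{G,k}(X)=\mathrm{secat}(\pi_k)$, $\mathrm{TC}^{G,\infty}(X)=\min_k\mathrm{TC}^{G,k}(X)$. *)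

From HB Require Import structures.
From mathcomp Require Import all_boot all_order all_algebra all_fingroup.
From mathcomp Require Import all_classical all_reals all_analysis.
From mathcomp Require Import Rstruct Rstruct_topology.

Set Implicit Arguments.
Unset Strict Implicit.
Unset Printing Implicit Defensive.

Import Order.TTheory GRing.Theory Num.Theory.
Local Open Scope classical_set_scope.
Local Open Scope ring_scope.

Definition RR : realType := Rdefinitions.R.

Definition unitI : set RR := [set t | 0 <= t <= 1].
Definition II : topologicalType := set_type unitI.

Lemma unitI0 : (0 : RR) \in unitI.
Proof. by rewrite inE /unitI /= lexx ler01. Qed.
Lemma unitI1 : (1 : RR) \in unitI.
Proof. by rewrite inE /unitI /= lexx ler01. Qed.
Definition I0 : II := exist _ 0 unitI0.
Definition I1 : II := exist _ 1 unitI1.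

Definition homotopic (Y Z : topologicalType) (f g : Y -> Z) : Prop :=
  exists H : (Y * II)%type -> Z, continuous H /\
    (forall y, H (y, I0) = f y) /\ (forall y, H (y, I1) = g y).

Definition path_connected_space (X : topologicalType) : Prop :=
  forall x y : X, exists f : II -> X, continuous f /\ f I0 = x /\ f I1 = y.

(* Reduced numerical invariants, valued in nat + {infinity} = option nat *)
Lemma ex_asbool_nat (P : nat -> Prop) :
  (exists n, P n) -> exists n, `[< P n >].
Proof. by case=> n Pn; exists n; apply/asboolP. Qed.

Definition least_nat (P : nat -> Prop) : option nat :=
  match pselect (exists n, P n) with
  | left h => Some (ex_minn (ex_asbool_nat h))
  | right _ => None
  end.

Definition secat_le (E B : topologicalType) (p : E -> B) (n : nat) : Prop :=
  exists U : 'I_n.+1 -> set B,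
    (forall i, open (U i)) /\ (\bigcup_i U i = setT) /\
    forall i, exists s : set_type (U i) -> E,
      continuous s /\ homotopic (p \o s) set_val.

Definition secat (E B : topologicalType) (p : E -> B) : option nat :=
  least_nat (secat_le p).

Definition cat_le (X : topologicalType) (n : nat) : Prop :=
  exists U : 'I_n.+1 -> set X,
    (forall i, open (U i)) /\ (\bigcup_i U i = setT) /\
    forall i, exists x0 : X,
      homotopic (set_val : set_type (U i) -> X) (fun _ => x0).

Definition LScat (X : topologicalType) : option nat := least_nat (@cat_le X).

Definition PX (X : topologicalType) : topologicalType :=
  set_type [set f : {compact-open, II -> X} | continuous f].

Definition pev (X : topologicalType) (g : PX X) (t : II) : X := set_val g t.

Definition path_ends (X : topologicalType) (g : PX X) : (X * X)%type :=
  (pev g I0, pev g I1).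

Definition TC (X : topologicalType) : option nat := secat (@path_ends X).

Definition is_group_action (gT : finGroupType) (X : topologicalType)
    (act : gT -> X -> X) : Prop :=
  (forall x, act 1%g x = x) /\
  (forall g h x, act (g * h)%g x = act g (act h x)) /\
  (forall g, continuous (act g)).

Definition free_group_action (gT : finGroupType) (X : topologicalType)
    (act : gT -> X -> X) : Prop :=
  forall g x, act g x = x -> g = 1%g.

Definition Pk_set (gT : finGroupType) (X : topologicalType)
    (act : gT -> X -> X) (m : nat) : set {ptws 'I_m.+1 -> PX X} :=
  [set gs | forall i j : 'I_m.+1, j = i.+1 :> nat ->
     exists g : gT, act g (pev (gs i) I1) = pev (gs j) I0].

Definition Pk (gT : finGroupType) (X : topologicalType)
    (act : gT -> X -> X) (m : nat) : topologicalType :=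
  set_type (@Pk_set gT X act m).

Definition pik (gT : finGroupType) (X : topologicalType)
    (act : gT -> X -> X) (m : nat) (gs : @Pk gT X act m) : (X * X)%type :=
  (pev (set_val gs ord0) I0, pev (set_val gs ord_max) I1).

(* TC^{G,k}(X) for k = m.+1, and TC^{G,infty}(X) = min_{k >= 1} TC^{G,k}(X). *)
Definition TCG (gT : finGroupType) (X : topologicalType)
    (act : gT -> X -> X) (m : nat) : option nat := secat (@pik gT X act m).

Definition TCGinf (gT : finGroupType) (X : topologicalType)
    (act : gT -> X -> X) : option nat :=
  least_nat (fun n => exists m : nat, secat_le (@pik gT X act m) n).

Definition sqnorm (n : nat) (x : 'rV[RR]_n) : RR := \sum_(i < n) x ord0 i ^+ 2.
Definition Disk (n : nat) : set 'rV[RR]_n := [set x | sqnorm x <= 1].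
Definition ODisk (n : nat) : set 'rV[RR]_n := [set x | sqnorm x < 1].
Definition Sphere (n : nat) : set 'rV[RR]_n := [set x | sqnorm x = 1].
Arguments Disk n : clear implicits.
Arguments ODisk n : clear implicits.
Arguments Sphere n : clear implicits.

(* A CW structure on a (Hausdorff) space X: a family of cells c with
   dimension dim c and characteristic map Phi_c : D^n -> X such that
   - Phi_c is continuous on D^n;
   - Phi_c restricted to the open disk is a homeomorphism onto the open
     cell e_c := Phi_c(int D^n) (injective, and open onto its image);
   - the open cells partition X;
   - Phi_c(S^{n-1}) lies in finitely many open cells of dimension < n;
   - X has the weak topology: A is closed as soon as every Phi_c^{-1}(A)
     is closed in D^n.                                                *)
Record CWstructure (X : topologicalType) := {
  cw_cell : Type;
  cw_dim : cw_cell -> nat;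
  cw_char : forall c, 'rV[RR]_(cw_dim c) -> X;
  cw_char_cont : forall c,
    continuous (fun x : set_type (Disk (cw_dim c)) => @cw_char c (set_val x));
  cw_char_inj : forall c, {in ODisk (cw_dim c) &, injective (@cw_char c)};
  cw_char_open : forall c (V : set (set_type (ODisk (cw_dim c)))), open V ->
    exists W : set X, open W /\
      (@cw_char c) @` (set_val @` V) = W `&` (@cw_char c) @` ODisk (cw_dim c);
  cw_disjoint : forall c d, c <> d ->
    (@cw_char c) @` ODisk (cw_dim c) `&` (@cw_char d) @` ODisk (cw_dim d) = set0;
  cw_cover : forall x : X, exists c, ((@cw_char c) @` ODisk (cw_dim c)) x;
  cw_boundary : forall c, exists (m : nat) (f : 'I_m -> cw_cell),
    (forall j, (cw_dim (f j) < cw_dim c)%N) /\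
    (@cw_char c) @` Sphere (cw_dim c) `<=`
      \bigcup_j (@cw_char (f j)) @` ODisk (cw_dim (f j));
  cw_weak : forall A : set X,
    (forall c, closed ((fun x : set_type (Disk (cw_dim c)) =>
                          @cw_char c (set_val x)) @^-1` A)) -> closed A
}.

Definition open_cell (X : topologicalType) (S : CWstructure X) (c : cw_cell S)
  : set X := (@cw_char X S c) @` ODisk (cw_dim c).

(* X is a CW complex with cell structure S: X Hausdorff plus S. *)
Definition is_CW_complex (X : topologicalType) (S : CWstructure X) : Prop :=
  hausdorff_space X.

Definition cellular_action (gT : finGroupType) (X : topologicalType)
    (S : CWstructure X) (act : gT -> X -> X) : Prop :=
  forall (g : gT) (c : cw_cell S), exists d : cw_cell S,
    act g @` open_cell c = open_cell d.

From HB Require Import structures.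
From mathcomp Require Import all_boot all_order all_algebra all_fingroup.
From mathcomp Require Import all_classical all_reals all_analysis.
From mathcomp Require Import Rstruct Rstruct_topology lra.

(* TC^{G,1}(X) is TC(X), since a 1-tuple of paths imposes no condition; hence
   TC^{G,oo}(X) <= TC(X) = cat(X).  Conversely, let U be open in X x X with a
   homotopy section s of pi_k, and fix x0 in X.  Over V = {x | (x0, x) in U},
   s gives paths gamma_1(x), ..., gamma_k(x), continuous in x, such that
   gamma_1(x)(0) ~ x0, gamma_k(x)(1) ~ x, and gamma_{i+1}(x)(0) = g_i(x)
   gamma_i(x)(1) for some g_i(x) in G.  Freeness makes g_i(x) unique, and then
   finiteness of G and the Hausdorff property make x |-> g_i(x) locally constant.
   Going along the chain, the end map gamma_k(-)(1) is homotopic to x |-> g(x) x0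
   for a locally constant g, which path-connectedness contracts to x0.  So V is
   contractible in X, and cat(X) <= TC^{G,k}(X). *)

Import Order.TTheory GRing.Theory Num.Theory.
Local Open Scope classical_set_scope.
Local Open Scope ring_scope.

Section continuity.
Context {A B C : topologicalType}.

Lemma fst_continuous : continuous (@fst A B).
Proof. by move=> ?; exact: cvg_fst. Qed.

Lemma snd_continuous : continuous (@snd A B).
Proof. by move=> ?; exact: cvg_snd. Qed.

Lemma comp_continuous {f : A -> B} {g : B -> C} :
  continuous f -> continuous g -> continuous (fun x => g (f x)).
Proof. by move=> cf cg x; apply: continuous_comp; [exact: cf | exact: cg]. Qed.

Lemma pair_continuous {f : A -> B} {g : A -> C} :
  continuous f -> continuous g -> continuous (fun x => (f x, g x)).
Proof. by move=> cf cg x; apply: cvg_pair; [exact: cf | exact: cg]. Qed.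

Lemma set_val_continuous {S : set A} : continuous (set_val : set_type S -> A).
Proof. exact: initial_continuous. Qed.

Lemma continuous_into_set_type {S : set B} {f : A -> set_type S} :
  continuous (set_val \o f) -> continuous f.
Proof. exact: continuous_comp_initial. Qed.

Lemma continuous_into_ptws {I : eqType} {f : A -> {ptws I -> B}} :
  (forall i, continuous (fun x => f x i)) -> continuous f.
Proof.
move=> cf x; apply/cvg_sup => i U [_ /= [[W oW <-]]] /= Wfx /filterS; apply.
exact/(cf i)/open_nbhs_nbhs.
Qed.

Lemma ptws_proj_continuous {I : eqType} (i : I) :
  continuous (fun f : {ptws I -> B} => f i).
Proof. exact: (@proj_continuous I (fun _ => B) i). Qed.

End continuity.

Lemma unitI_clamp (t : RR) : Num.min (Num.max t 0) 1 \in unitI.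
Proof.
by rewrite inE /unitI /= le_min ler01 le_max lexx orbT ge_min lexx orbT.
Qed.

Definition clampI (t : RR) : II := exist _ (Num.min (Num.max t 0) 1) (unitI_clamp t).

Lemma clampI_continuous : continuous clampI.
Proof.
apply: continuous_into_set_type => t.
apply: (@continuous_min _ RR (fun t => Num.max t 0) (fun _ => 1)); last exact: cvg_cst.
by apply: (@continuous_max _ RR id (fun _ => 0)); [exact: cvg_id | exact: cvg_cst].
Qed.

Lemma unitI_val (t : II) : 0 <= set_val t <= 1.
Proof. by case: t => x xI; move/set_mem: (xI). Qed.

Lemma clampI_val (t : II) : clampI (set_val t) = t.
Proof.
apply: eq_sig_hprop => [? ? ?|/=]; first exact: Prop_irrelevance.
by have /andP[t0 t1] := unitI_val t; rewrite max_l // min_l.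
Qed.

Lemma clampI0 : clampI 0 = I0.
Proof. exact: clampI_val I0. Qed.

Lemma clampI1 : clampI 1 = I1.
Proof. exact: clampI_val I1. Qed.

Lemma compact_II : compact [set: II].
Proof.
have -> : [set: II] = clampI @` `[0, 1]%classic.
  apply/seteqP; split => t // _; exists (set_val t); last exact: clampI_val.
  by rewrite /= in_itv; exact: unitI_val.
apply: continuous_compact; last exact: segment_compact.
by apply: continuous_subspaceT => x; exact: clampI_continuous.
Qed.

Lemma pev_continuous (X : topologicalType) :
  continuous (fun p : PX X * II => pev p.1 p.2).
Proof.
have lcII : locally_compact [set: II].
  move=> x _; exists setT; rewrite ?withinET; first exact: filterT.
  by split; [exact: compact_II | exact: closedT].
have -> : (fun p : PX X * II => pev p.1 p.2) =
    uncurry (fun g : PX X => set_val g : II -> X) by apply/funext => -[].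
apply: (@continuous_uncurry_regular (PX X) II X (fun g => set_val g) lcII
  (@uniform_regular II) set_val_continuous).
by move=> [f fP]; move/set_mem: (fP).
Qed.

Lemma affine_reparam_continuous {Y : topologicalType} (a b : RR) :
  continuous (fun p : Y * II => (p.1, clampI (a * set_val p.2 + b))).
Proof.
apply: pair_continuous; first exact: fst_continuous.
apply: (@comp_continuous _ _ _ (fun p : Y * II => a * set_val p.2 + b) clampI _ clampI_continuous).
apply: (@comp_continuous _ _ _ (fun p : Y * II => set_val p.2) (fun t : RR => a * t + b)).
  exact: comp_continuous snd_continuous set_val_continuous.
move=> t; apply: cvgD; last exact: cvg_cst.
by apply: cvgM; [exact: cvg_cst | exact: cvg_id].
Qed.

Lemma continuous_paste_half (Y Z : topologicalType) (F1 F2 : Y * II -> Z) :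
  continuous F1 -> continuous F2 ->
  (forall p : Y * II, set_val p.2 = 2^-1 :> RR -> F1 p = F2 p) ->
  continuous (fun p : Y * II => if set_val p.2 <= 2^-1 then F1 p else F2 p).
Proof.
move=> cF1 cF2 F12; apply/continuous_subspace_setT.
have cv : continuous (fun p : Y * II => set_val p.2).
  exact: comp_continuous snd_continuous set_val_continuous.
have -> : [set: Y * II] =
    [set p | set_val p.2 <= 2^-1] `|` [set p | 2^-1 <= set_val p.2].
  apply/seteqP; split => p // _ /=.
  by case: (leP (set_val p.2) 2^-1) => hp; [left | right; exact: ltW].
apply: withinU_continuous.
- exact: (proj1 (continuous_closedP _) cv _ (@closed_le RR 2^-1)).
- exact: (proj1 (continuous_closedP _) cv _ (@closed_ge RR 2^-1)).
- apply: (@subspace_eq_continuous _ _ _ F1); last exact: continuous_subspaceT.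
  by move=> p /set_mem /= hp; rewrite /from_subspace /= hp.
- apply: (@subspace_eq_continuous _ _ _ F2); last exact: continuous_subspaceT.
  move=> p /set_mem /= hp; rewrite /from_subspace /=; case: ifPn => // hp2.
  by apply/esym/F12/eqP; rewrite eq_le hp hp2.
Qed.

Section homotopy.
Context {Y Z : topologicalType}.
Implicit Types f g h : Y -> Z.

Lemma homotopic_continuous {f g} : homotopic f g -> continuous f.
Proof.
case=> H [cH [H0 _]]; rewrite (_ : f = fun y => H (y, I0)); last first.
  by apply/funext => y; rewrite H0.
apply: (@comp_continuous _ _ _ (fun y => (y, I0)) H _ cH).
exact: pair_continuous (fun _ => cvg_id) (@cst_continuous _ _ I0).
Qed.

Lemma homotopic_sym {f g} : homotopic f g -> homotopic g f.
Proof.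
case=> H [cH [H0 H1]].
exists (fun p => H (p.1, clampI ((-1) * set_val p.2 + 1))); split; last split.
- exact: comp_continuous (affine_reparam_continuous (-1) 1) cH.
- by move=> y /=; rewrite mulr0 add0r clampI1.
- by move=> y /=; rewrite mulr1 addNr clampI0.
Qed.

Lemma homotopic_trans {f g h} : homotopic f g -> homotopic g h -> homotopic f h.
Proof.
case=> H1 [c1 [H10 H11]] [H2 [c2 [H20 H21]]].
pose F1 (p : Y * II) := H1 (p.1, clampI (2 * set_val p.2 + 0)).
pose F2 (p : Y * II) := H2 (p.1, clampI (2 * set_val p.2 + (-1))).
exists (fun p => if set_val p.2 <= 2^-1 then F1 p else F2 p); split; last split.
- apply: continuous_paste_half.
  + exact: comp_continuous (affine_reparam_continuous 2 0) c1.
  + exact: comp_continuous (affine_reparam_continuous 2 (-1)) c2.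
  + move=> p p2; rewrite /F1 /F2 p2.
    have -> : 2 * 2^-1 + 0 = 1 :> RR by lra.
    have -> : 2 * 2^-1 + -1 = 0 :> RR by lra.
    by rewrite clampI1 clampI0 H11 H20.
- move=> y /=; rewrite invr_ge0 ler0n.
  by rewrite /F1 /= mulr0 addr0 clampI0 H10.
- move=> y /=; have -> : (1 <= 2^-1 :> RR) = false by apply/negbTE; rewrite -ltNge; lra.
  rewrite /F2 /=; have -> : 2 * 1 + -1 = 1 :> RR by lra.
  by rewrite clampI1 H21.
Qed.

Lemma homotopic_comp {W : topologicalType} {k : Z -> W} {f g} :
  continuous k -> homotopic f g -> homotopic (k \o f) (k \o g).
Proof.
move=> ck [H [cH [H0 H1]]]; exists (k \o H); split; last by split=> y /=; congr k.
exact: comp_continuous cH ck.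
Qed.

Lemma homotopic_precomp {W : topologicalType} {u : W -> Y} {f g} :
  continuous u -> homotopic f g -> homotopic (f \o u) (g \o u).
Proof.
move=> cu [H [cH [H0 H1]]]; exists (fun p => H (u p.1, p.2)); split=> //.
apply: (@comp_continuous _ _ _ (fun p => (u p.1, p.2)) H _ cH).
exact: pair_continuous (comp_continuous fst_continuous cu) snd_continuous.
Qed.

End homotopy.

Lemma homotopic_path_ends {Y X : topologicalType} {gam : Y -> PX X} :
  continuous gam -> homotopic (fun y => pev (gam y) I0) (fun y => pev (gam y) I1).
Proof.
move=> cgam; exists (fun p => pev (gam p.1) p.2); split=> //.
apply: (@comp_continuous _ _ _ (fun p => (gam p.1, p.2)) _ _ (@pev_continuous X)).
exact: pair_continuous (comp_continuous fst_continuous cgam) snd_continuous.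
Qed.

Definition locally_constant {Y : topologicalType} {T : Type} (h : Y -> T) :=
  forall y, \forall z \near y, h z = h y.

Lemma locally_constant_cst {Y : topologicalType} {T : Type} (c : T) :
  locally_constant (fun _ : Y => c).
Proof. by move=> y; apply: nearW. Qed.

Lemma locally_constant_fst {Y W : topologicalType} {T : Type} (h : Y -> T) :
  locally_constant h -> locally_constant (fun p : Y * W => h p.1).
Proof. by move=> hl p; exact: fst_continuous (hl p.1). Qed.

Lemma locally_constant_op {Y : topologicalType} {T : Type} (op : T -> T -> T)
    (h1 h2 : Y -> T) :
  locally_constant h1 -> locally_constant h2 ->
  locally_constant (fun y => op (h1 y) (h2 y)).
Proof. by move=> l1 l2 y; apply: filterS2 (l1 y) (l2 y) => z /= -> ->. Qed.

Lemma continuous_locally_constant_index {Y Z : topologicalType} {T : Type}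
    (h : Y -> T) (F : T -> Y -> Z) :
  locally_constant h -> (forall t, continuous (F t)) ->
  continuous (fun y => F (h y) y).
Proof.
move=> hl cF y U nU.
have FU : nbhs y (F (h y) @^-1` U) := cF (h y) y U nU.
by apply: filterS2 FU (hl y) => z /= ? ->.
Qed.

Lemma continuous_neq_near {Y X : topologicalType} (a b : Y -> X) (y : Y) :
  hausdorff_space X -> continuous a -> continuous b -> a y <> b y ->
  \forall z \near y, a z <> b z.
Proof.
move=> hX ca cb neq; apply: contrapT => hn; apply/neq/hX => A B nA nB.
apply: contrapT => hAB; apply: hn.
have aA : nbhs y (a @^-1` A) := ca y A nA.
have bB : nbhs y (b @^-1` B) := cb y B nB.
apply: filterS2 aA bB => z /= az bz eq.
by apply: hAB; exists (a z); split => //; rewrite eq.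
Qed.

Section free_action.
Context {gT : finGroupType} {X : topologicalType} {act : gT -> X -> X}.
Hypotheses (ga : is_group_action act) (fr : free_group_action act).

Lemma act_continuous (g : gT) : continuous (act g).
Proof. by case: ga => _ []. Qed.

Lemma free_action_inj (x : X) (g h : gT) : act g x = act h x -> g = h.
Proof.
case: ga => [a1 [aM _]] e.
have /fr gh1 : act (g^-1 * h)%g x = x by rewrite aM -e -aM mulVg a1.
by apply/esym; rewrite -[h]mul1g -(mulgV g) -mulgA gh1 mulg1.
Qed.

(* Freeness makes the translating element unique; finiteness of the group and
   the Hausdorff property make it locally constant. *)
Lemma locally_constant_translation {Y : topologicalType} (a b : Y -> X) :
  hausdorff_space X -> continuous a -> continuous b ->
  (forall y, exists g, act g (a y) = b y) ->
  exists g : Y -> gT, locally_constant g /\ forall y, act (g y) (a y) = b y.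
Proof.
move=> hX ca cb ex; pose g y := projT1 (cid (ex y)).
have gP y : act (g y) (a y) = b y := projT2 (cid (ex y)).
exists g; split=> // y.
have other h : \forall z \near y, h <> g y -> act h (a z) <> b z.
  have [-> | hgy] := pselect (h = g y); first exact: nearW.
  have hne : act h (a y) <> b y.
    by move=> e; apply/hgy/(free_action_inj (a y)); rewrite e gP.
  have cha : continuous (fun z => act h (a z)).
    exact: comp_continuous ca (act_continuous h).
  by apply: filterS (continuous_neq_near _ _ y hX cha cb hne) => z.
apply: filterS (filter_forall _ other) => z /= hz.
by apply: contrapT => ne; exact: hz (g z) ne (gP z).
Qed.

End free_action.

Section orbit.
Context {gT : finGroupType} {X : topologicalType} {act : gT -> X -> X}.
Variable x0 : X.
Hypotheses (ga : is_group_action act) (fr : free_group_action act).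
Hypotheses (hX : hausdorff_space X) (pc : path_connected_space X).

Definition homotopic_to_orbit {Y : topologicalType} (f : Y -> X) :=
  exists h : Y -> gT, locally_constant h /\ homotopic f (fun y => act (h y) x0).

Lemma homotopic_to_orbit_homotopic {Y : topologicalType} {f f' : Y -> X} :
  homotopic f f' -> homotopic_to_orbit f' -> homotopic_to_orbit f.
Proof. by move=> ff' [h [lh hh]]; exists h; split=> //; exact: homotopic_trans ff' hh. Qed.

Lemma homotopic_to_orbit_act {Y : topologicalType} {a b : Y -> X} {g : Y -> gT} :
  locally_constant g -> (forall y, act (g y) (a y) = b y) ->
  homotopic_to_orbit a -> homotopic_to_orbit b.
Proof.
move=> lg gab [h [lh [K [cK [K0 K1]]]]].
exists (fun y => (g y * h y)%g); split; first exact: locally_constant_op.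
exists (fun p => act (g p.1) (K p)); split; last split.
- apply: (continuous_locally_constant_index (fun p : Y * II => g p.1)
    (fun t p => act t (K p))); first exact: locally_constant_fst.
  by move=> t /=; exact: comp_continuous cK (act_continuous ga t).
- by move=> y /=; rewrite K0 gab.
- by move=> y /=; rewrite K1; case: ga => _ [-> _].
Qed.

Lemma homotopic_to_orbit_cst {Y : topologicalType} {f : Y -> X} :
  homotopic f (fun _ => x0) -> homotopic_to_orbit f.
Proof.
move=> fx0; exists (fun _ => 1%g); split; first exact: locally_constant_cst.
by case: ga => act1 _; under eq_fun do rewrite act1.
Qed.

(* A path from [act a x0] to [x0] for each [a], glued along the locally
   constant [h]. *)
Lemma homotopic_to_orbit_contract {Y : topologicalType} {f : Y -> X} :
  homotopic_to_orbit f -> homotopic f (fun _ => x0).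
Proof.
move=> [h [lh fh]]; apply: homotopic_trans fh _.
pose P a := projT1 (cid (pc (act a x0) x0)).
have PP a : continuous (P a) /\ P a I0 = act a x0 /\ P a I1 = x0.
  exact: projT2 (cid (pc (act a x0) x0)).
exists (fun p => P (h p.1) p.2); split; last split.
- apply: (continuous_locally_constant_index (fun p : Y * II => h p.1)
    (fun t p => P t p.2)); first exact: locally_constant_fst.
  by move=> t /=; exact: comp_continuous snd_continuous (PP t).1.
- by move=> y /=; rewrite (PP (h y)).2.1.
- by move=> y /=; rewrite (PP (h y)).2.2.
Qed.

Lemma homotopic_to_orbit_chain {Y : topologicalType} {m : nat}
    {gam : 'I_m.+1 -> Y -> PX X} :
  (forall j, continuous (gam j)) -> (forall y, @Pk_set gT X act m (fun j => gam j y)) ->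
  homotopic_to_orbit (fun y => pev (gam ord0 y) I0) ->
  homotopic_to_orbit (fun y => pev (gam ord_max y) I1).
Proof.
move=> cgam link start.
pose e0 j y := pev (gam j y) I0; pose e1 j y := pev (gam j y) I1.
have ends j : homotopic (e0 j) (e1 j) := homotopic_path_ends (cgam j).
suff: forall k, (k <= m)%N -> homotopic_to_orbit (e1 (inord k)).
  move/(_ m (leqnn m)); rewrite (_ : inord m = ord_max) //.
  by apply: val_inj; rewrite /= inordK.
elim=> [_ | k IH km].
  rewrite (_ : inord 0 = ord0); last by apply: val_inj; rewrite /= inordK.
  exact: homotopic_to_orbit_homotopic (homotopic_sym (ends _)) start.
have [g [lg gP]] : exists g : Y -> gT, locally_constant g /\
    forall y, act (g y) (e1 (inord k) y) = e0 (inord k.+1) y.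
  apply: locally_constant_translation => //.
  - exact: homotopic_continuous (homotopic_sym (ends _)).
  - exact: homotopic_continuous (ends _).
  - by move=> y; apply: (link y); rewrite !inordK // ltnS ltnW.
apply: homotopic_to_orbit_homotopic (homotopic_sym (ends _)) _.
exact: homotopic_to_orbit_act lg gP (IH (ltnW km)).
Qed.

Lemma cat_le_of_secat_le_pik (m n : nat) :
  secat_le (@pik gT X act m) n -> cat_le X n.
Proof.
case=> U [oU [cover sec]].
have c0 : continuous (fun x : X => (x0, x)).
  exact: pair_continuous (@cst_continuous _ _ x0) (fun _ => cvg_id).
exists (fun i => [set x | U i (x0, x)]); split; last split.
- by move=> i; exact: (proj1 (continuousP _) c0 _ (oU i)).
- apply/seteqP; split => x // _.
  have : (\bigcup_i U i) (x0, x) by rewrite cover.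
  by case=> i _ hi; exists i.
move=> i; exists x0; have [s [cs hs]] := sec i.
pose u (y : set_type [set x | U i (x0, x)]) : set_type (U i) :=
  exist _ (x0, set_val y) (mem_set (set_mem (valP y))).
have cu : continuous u.
  by apply: continuous_into_set_type; exact: comp_continuous set_val_continuous c0.
pose gam j y := set_val (s (u y)) j.
have cgam j : continuous (gam j).
  exact: comp_continuous (comp_continuous cu cs)
    (comp_continuous set_val_continuous (ptws_proj_continuous j)).
have hsu := homotopic_precomp cu hs.
have start : homotopic (fun y => pev (gam ord0 y) I0) (fun _ => x0).
  exact: homotopic_comp fst_continuous hsu.
have stop : homotopic set_val (fun y => pev (gam ord_max y) I1).
  exact: homotopic_sym (homotopic_comp snd_continuous hsu).
apply/homotopic_to_orbit_contract/(homotopic_to_orbit_homotopic stop).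
apply: homotopic_to_orbit_chain cgam _ (homotopic_to_orbit_cst start).
by move=> y; exact: set_mem (valP (s (u y))).
Qed.

End orbit.

Lemma secat_le_pik_path_ends {gT : finGroupType} {X : topologicalType}
    (act : gT -> X -> X) (n : nat) :
  secat_le (@path_ends X) n -> secat_le (@pik gT X act 0) n.
Proof.
case=> U [oU [cover sec]]; exists U; do 2!split=> //.
move=> i; have [s [cs hs]] := sec i.
have one_path w : (fun _ : 'I_1 => s w) \in @Pk_set gT X act 0.
  by apply: mem_set => a b; rewrite (ord1 a) (ord1 b).
exists (fun w => exist _ (fun _ : 'I_1 => s w) (one_path w)); split=> //.
by apply: continuous_into_set_type; apply: continuous_into_ptws.
Qed.

Lemma least_nat_SomeP (P : nat -> Prop) (k : nat) :
  least_nat P = Some k <-> P k /\ forall j, P j -> (k <= j)%N.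
Proof.
rewrite /least_nat; case: pselect => [h|h]; last first.
  by split=> // -[Pk _]; case: h; exists k.
case: ex_minnP => c /asboolP Pc cmin; split => [[<-]|[Pk kmin]].
  by split=> // j Pj; apply/cmin/asboolP.
by congr Some; apply/eqP; rewrite eqn_leq kmin // cmin //; apply/asboolP.
Qed.

Lemma least_nat_NoneP (P : nat -> Prop) : least_nat P = None <-> forall n, ~ P n.
Proof.
rewrite /least_nat; case: pselect => [[n Pn]|h]; split=> //.
- by move/(_ n Pn).
- by move=> _ n Pn; apply: h; exists n.
Qed.

Lemma least_nat_squeeze (P Q R : nat -> Prop) :
  (forall n, P n -> Q n) -> (forall n, Q n -> R n) ->
  least_nat R = least_nat P -> least_nat Q = least_nat R.
Proof.
move=> PQ QR; case E : (least_nat R) => [k|] RP.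
  have [Rk kmin] := proj1 (least_nat_SomeP R k) E.
  have [Pk _] := proj1 (least_nat_SomeP P k) (esym RP).
  by apply/least_nat_SomeP; split=> [|j /QR]; [exact: PQ | exact: kmin].
by apply/least_nat_NoneP => n /QR; exact: (proj1 (least_nat_NoneP R) E).
Qed.

Lemma secat_le_empty_base (E B : topologicalType) (p : E -> B) (n : nat) :
  (B -> False) -> secat_le p n.
Proof.
move=> noB; exists (fun _ => setT); split; first by move=> ?; exact: openT.
split; first by apply/seteqP; split=> // b; case: noB.
move=> i; exists (fun w => False_rect E (noB (set_val w))); split.
  by move=> w; case: (noB (set_val w)).
exists (fun q => False_rect B (noB (set_val q.1))); split.
  by move=> q; case: (noB (set_val q.1)).
by split=> w; case: (noB (set_val w)).
Qed.

Lemma inhabited_of_LScat_eq_TC {X : topologicalType} : LScat X = TC X -> inhabited X.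
Proof.
move=> catTC; apply: contrapT => noX.
have : LScat X = Some 0.
  rewrite catTC; apply/least_nat_SomeP; split=> //.
  by apply: secat_le_empty_base => -[x _]; exact: noX.
by case/least_nat_SomeP => -[U [_ [_ /(_ ord0) [x _]]]] _; exact: noX.
Qed.

Theorem mainTheorem15 (gT : finGroupType) (X : topologicalType)
  (S : CWstructure X) (act : gT -> X -> X) :
  is_CW_complex S ->
  path_connected_space X ->
  is_group_action act -> free_group_action act -> cellular_action S act ->
  LScat X = TC X ->
  TCGinf act = LScat X.
Proof.
move=> hX pc ga fr _ catTC; have [x0] := inhabited_of_LScat_eq_TC catTC.
apply: (least_nat_squeeze (secat_le (@path_ends X))) => //.
- by move=> n /(secat_le_pik_path_ends act) ?; exists 0%N.
- by move=> n [m]; exact: (cat_le_of_secat_le_pik x0 ga fr hX pc m n).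
Qed.
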